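(* Let $I$ be a finite set. The space $\mathcal{P}(\mathbf{k}\mathbf{SC})[I]$ of primitive elements of $\mathbf{k}\mathbf{SC}[I]$ has a basis consisting of the elements \[\omega^{\Gamma}=\sum_{\Phi\le\Gamma}\mu(\Phi,\Gamma)\,\Phi\] for connected $\Gamma\in\mathbf{SC}[I]$.
   Context: $\mathbf{k}$ is a field of characteristic $0$. A simplicial complex on a finite ground set $I$ is a downward closed collection $\Gamma\subseteq2^I$. $\mathbf{SC}[I]$ is the set of simplicial complexes on $I$, ordered by $\Phi\le\Gamma$ iff every $X\in\Phi$ lies in $\Gamma$; $\mu$ is the Möbius function of this poset; $\mathbf{k}\mathbf{SC}[I]$ is the vector space with basis $\mathbf{SC}[I]$. Multiplication: for $\Gamma_1$ on $S$, $\Gamma_2$ on $T$ disjoint, $m_{S,T}(\Gamma_1,\Gamma_2)=\Gamma_1\sqcup\Gamma_2=\{A\subseteq S\sqcup T:A\in\Gamma_1\text{ or }A\in\Gamma_2\}$. Comultiplication: $\Delta_{S,T}(\Gamma)=\Gamma|S\otimes\Gamma|T$ with $\Gamma|S=\Gamma\cap2^S$. An element $p\in\mathbf{k}\mathbf{SC}[I]$ is primitive if $\Delta_{S,T}(p)=0$ for all $I=S\sqcup T$ with $S,T$ nonempty. $\Gamma\in\mathbf{SC}[I]$ is connected if it cannot be written as $\Gamma_1\sqcup\Gamma_2$ with $\Gamma_1\in\mathbf{SC}[S]$, $\Gamma_2\in\mathbf{SC}[T]$, $I=S\sqcup T$, $S,T$ nonempty. *)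

From HB Require Import structures.
From mathcomp Require Import all_boot all_order all_algebra.
Set Implicit Arguments. Unset Strict Implicit. Unset Printing Implicit Defensive.
Import GRing.Theory.
Local Open Scope ring_scope.

(* Defined by recursion with fuel; fuel #|T| suffices since
   strict chains have length < #|T|. *)
Fixpoint mobius_rec (R : pzRingType) (T : finType) (le : rel T) (n : nat)
    (x y : T) : R :=
  match n with
  | 0 => (x == y)%:R
  | n'.+1 =>
      if x == y then 1
      else if le x y then
        - \sum_(z : T | le x z && (z != y) && le z y) mobius_rec R le n' x z
      else 0
  end.

Definition mobius (R : pzRingType) (T : finType) (le : rel T) (x y : T) : R :=
  mobius_rec R le #|T| x y.

Definition is_sc (I : finType) (G : {set {set I}}) : bool :=
  [forall X in G, forall Y : {set I}, (Y \subset X) ==> (Y \in G)].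

Definition SC (I : finType) := {G : {set {set I}} | is_sc G}.

Definition sc_le (I : finType) : rel (SC I) :=
  fun P G => (val P \subset val G).

Definition sc_mu (k : pzRingType) (I : finType) (P G : SC I) : k :=
  mobius k (@sc_le I) P G.

Definition restr (I : finType) (G : {set {set I}}) (S : {set I}) :
  {set {set I}} := [set X in G | X \subset S].

Definition on_ground (I : finType) (G : {set {set I}}) (S : {set I}) : bool :=
  [forall X in G, X \subset S].

(* the vector space kSC[I], with basis SC[I] (coordinates) *)
Notation kSC k I := {ffun SC I -> k}%type.

(* p is primitive: for every decomposition I = S ⊔ T with S, T nonempty,
   Delta_{S,T}(p) = sum_G p(G) (G|S ⊗ G|T) = 0 in kSC[S] ⊗ kSC[T];
   written in the basis of pairs (A, B) of the tensor product. *)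
Definition primitive (k : pzRingType) (I : finType) (p : kSC k I) : Prop :=
  forall S : {set I}, S != set0 -> ~: S != set0 ->
  forall A B : {set {set I}},
    \sum_(G : SC I | (restr (val G) S == A) && (restr (val G) (~: S) == B))
      p G = 0.

Definition connected (I : finType) (G : SC I) : bool :=
  ~~ [exists S : {set I}, exists G1 : SC I, exists G2 : SC I,
       [&& S != set0, ~: S != set0, on_ground (val G1) S,
           on_ground (val G2) (~: S) & val G == val G1 :|: val G2]].

Definition omega (k : pzRingType) (I : finType) (G : SC I) : kSC k I :=
  [ffun P => if sc_le P G then sc_mu k P G else 0].

From HB Require Import structures.
From mathcomp Require Import all_boot all_order all_algebra.
From mathcomp Require Import zify.
Import GRing.Theory.
Local Open Scope ring_scope.
Set Implicit Arguments. Unset Strict Implicit. Unset Printing Implicit Defensive.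

(** The Möbius function of SC[I] has the closed form [sc_mobius]:
    μ(Φ, Γ) = (-1)^|Γ ∖ Φ| when every face of Γ outside Φ is a minimal
    non-face of Φ, and 0 otherwise.  This formula and the primitivity of ω^Γ
    both follow from a sign-reversing involution that toggles one well-chosen
    face: a minimal face of Γ ∖ Φ for the recursion defining μ, and, when Γ is
    connected and I = S ⊔ T, a facet of Γ meeting both S and T, whose toggling
    preserves the restrictions to S and to T.  As ω^Γ is Γ plus complexes
    strictly below Γ, the family is unitriangular, hence free.  Finally Möbius
    inversion writes any p as ∑_Γ (∑_{Q ⊇ Γ} p(Q)) ω^Γ, and for primitive p
    the coefficient of a disconnected Γ = Γ1 ⊔ Γ2 is a sum of coefficients of
    Δ_{S,T}(p), hence 0.  Nothing depends on the characteristic of k: μ is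
    integer valued. *)

Lemma sum_involution_eq0 (V : zmodType) (T : finType) (h : T -> T)
    (D : pred T) (f : T -> V) :
  involutive h -> (forall x, D (h x) = D x) ->
  (forall x, D x -> f (h x) = - f x) -> (forall x, D x -> h x = x -> f x = 0) ->
  \sum_(x | D x) f x = 0.
Proof.
move=> hK Dh fh ffix; pose r := @enum_rank T.
rewrite (bigID (fun x => r x < r (h x))%N) /=.
rewrite [X in _ + X](bigID (fun x => r (h x) < r x)%N) /=.
rewrite [X in _ + (_ + X)]big1 ?addr0; last first.
  move=> x /andP [/andP [Dx ltx] lthx]; apply: ffix => //.
  apply: (@enum_rank_inj T); apply: ord_inj; apply: anti_leq.
  by apply/andP; split; rewrite leqNgt.
suff -> : \sum_(x | D x && ~~ (r x < r (h x))%N && (r (h x) < r x)%N) f x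
        = - \sum_(x | D x && (r x < r (h x))%N) f x by rewrite addrN.
rewrite (reindex_inj (inv_inj hK)) /= -sumrN; apply: eq_big => x; rewrite hK Dh.
  by case: (D x); case: ltngtP.
by move=> /andP [/andP [Dx _] _]; apply: fh.
Qed.

Section SimplicialComplexes.

Variables (R : pzRingType) (I : finType).
Implicit Types (P G Q : SC I) (a b : {set {set I}}) (S X Y Z : {set I}).

Lemma is_scP a :
  reflect (forall X Y, X \in a -> Y \subset X -> Y \in a) (is_sc a).
Proof.
apply: (iffP forall_inP) => [H X Y Xa | H X Xa].
  by have /forallP /(_ Y) /implyP := H X Xa.
by apply/forallP => Y; apply/implyP; apply: H.
Qed.

Lemma sc_down P X Y : X \in val P -> Y \subset X -> Y \in val P.
Proof. exact: (elimT (is_scP _) (valP P)). Qed.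

Lemma is_sc_restr a S : is_sc a -> is_sc (restr a S).
Proof.
move/is_scP=> sc_a; apply/is_scP => X Y; rewrite !inE => /andP [Xa XS] YX.
by rewrite (sc_a X) ?(subset_trans YX XS).
Qed.

Lemma restr_subset a S : restr a S \subset a.
Proof. by apply/subsetP => X; rewrite inE => /andP []. Qed.

Lemma restr_setU1 a X S : ~~ (X \subset S) -> restr (X |: a) S = restr a S.
Proof.
move=> XS; apply/setP => Y; rewrite !inE.
by case: eqVneq => // ->; rewrite (negbTE XS) !andbF.
Qed.

Lemma restr_setD1 a X S : ~~ (X \subset S) -> restr (a :\ X) S = restr a S.
Proof.
move=> XS; apply/setP => Y; rewrite !inE.
by case: eqVneq => // ->; rewrite (negbTE XS) !andbF.
Qed.

Lemma is_sc_setU1P P X :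
  reflect (forall Y, Y \proper X -> Y \in val P) (is_sc (X |: val P)).
Proof.
apply: (iffP (is_scP _)) => [sc Y YX | HX Z Y].
  have := sc X Y (setU11 _ _) (proper_sub YX).
  by rewrite in_setU1 => /predU1P [YeX | //]; rewrite YeX properxx in YX.
rewrite !in_setU1 => /predU1P [-> | ZP] YZ.
  by case: eqVneq => //= YX; apply: HX; rewrite properEneq YX.
by rewrite (sc_down ZP YZ) orbT.
Qed.

Lemma is_sc_setD1 P X :
  (forall Y, Y \in val P -> X \subset Y -> Y = X) -> is_sc (val P :\ X).
Proof.
move=> HX; apply/is_scP => Z Y; rewrite !in_setD1 => /andP [ZX ZP] YZ.
rewrite (sc_down ZP YZ) andbT; apply: contra ZX => /eqP YX.
by rewrite (HX Z ZP) // -YX.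
Qed.

Definition new_faces_minimal a b : bool :=
  [forall X in b :\: a, forall Y : {set I}, (Y \proper X) ==> (Y \in a)].

Lemma new_faces_minimalP a b :
  reflect (forall X Y, X \in b -> X \notin a -> Y \proper X -> Y \in a)
          (new_faces_minimal a b).
Proof.
apply: (iffP forall_inP) => [H X Y Xb Xa | H X].
  have /H /forallP /(_ Y) /implyP : X \in b :\: a by rewrite inE Xa.
  exact.
by rewrite inE => /andP [Xa Xb]; apply/forallP => Y; apply/implyP; apply: H.
Qed.

Definition sc_mobius a b : R :=
  if (a \subset b) && new_faces_minimal a b then (-1) ^+ #|b :\: a| else 0.

Lemma sc_mobius_id a : sc_mobius a a = 1.
Proof.
rewrite /sc_mobius subxx setDv cards0; case: new_faces_minimalP => // [[]] X Y.
by move=> ->.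
Qed.

Lemma sc_mobius_eq0 a b : ~~ (a \subset b) -> sc_mobius a b = 0.
Proof. by rewrite /sc_mobius => /negbTE ->. Qed.

Lemma sc_mobius_setU1r a b X :
  X \notin a -> X \notin b -> a \subset b ->
  (forall Y, Y \proper X -> Y \in a) ->
  sc_mobius a (X |: b) = - sc_mobius a b.
Proof.
move=> Xa Xb ab HX; rewrite /sc_mobius (subset_trans ab (subsetUr _ _)) ab /=.
have -> : new_faces_minimal a (X |: b) = new_faces_minimal a b.
  apply/new_faces_minimalP/new_faces_minimalP => H Z Y.
    by move=> Zb; apply: H; rewrite in_setU1 Zb orbT.
  by rewrite in_setU1 => /predU1P [-> _ | ]; [exact: HX | exact: H].
have -> : (X |: b) :\: a = X |: (b :\: a).
  by apply/setP => W; rewrite !inE; case: eqVneq => // ->; rewrite Xa.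
rewrite cardsU1 inE (negbTE Xb) andbF add1n exprS mulN1r.
by case: ifP; rewrite ?oppr0.
Qed.

Lemma sc_mobius_setU1l a b X :
  X \in b -> X \notin a -> (forall Y, Y \proper X -> Y \in a) ->
  (forall Y, Y \in b -> X \subset Y -> Y = X) ->
  sc_mobius (X |: a) b = - sc_mobius a b.
Proof.
move=> Xb Xa HX Xmax; rewrite /sc_mobius subUset sub1set Xb /=.
have -> : new_faces_minimal (X |: a) b = new_faces_minimal a b.
  apply/new_faces_minimalP/new_faces_minimalP => H Z Y Zb.
    case: (eqVneq Z X) => [-> _ /HX // | ZX Za YZ].
    have : Y \in X |: a by apply: (H Z) YZ; rewrite // in_setU1 negb_or ZX.
    rewrite in_setU1 => /predU1P [YX | //].
    by move: ZX; rewrite (Xmax Z Zb) ?eqxx // -YX proper_sub.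
  rewrite in_setU1 negb_or => /andP [_ Za] /(H Z Y Zb Za) Ya.
  by rewrite in_setU1 Ya orbT.
have -> : b :\: a = X |: (b :\: (X |: a)).
  by apply/setP => W; rewrite !inE; case: eqVneq => // ->; rewrite Xa Xb.
rewrite cardsU1 !inE eqxx /= add1n exprS mulN1r.
by case: ifP; rewrite ?oppr0 ?opprK.
Qed.

(* If the result is not a complex, [insubd] leaves P unchanged. *)
Definition toggle X P : SC I :=
  insubd P (if X \in val P then val P :\ X else X |: val P).

Lemma toggle_add X P :
  X \notin val P -> is_sc (X |: val P) -> val (toggle X P) = X |: val P.
Proof. by move=> XP sc; rewrite /toggle val_insubd (negbTE XP) sc. Qed.

Lemma toggle_rem X P :
  X \in val P -> is_sc (val P :\ X) -> val (toggle X P) = val P :\ X.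
Proof. by move=> XP sc; rewrite /toggle val_insubd XP sc. Qed.

Lemma toggle_add_id X P :
  X \notin val P -> ~~ is_sc (X |: val P) -> toggle X P = P.
Proof.
move=> XP sc; apply: val_inj.
by rewrite /toggle val_insubd (negbTE XP) (negbTE sc).
Qed.

Lemma toggle_rem_id X P :
  X \in val P -> ~~ is_sc (val P :\ X) -> toggle X P = P.
Proof.
by move=> XP sc; apply: val_inj; rewrite /toggle val_insubd XP (negbTE sc).
Qed.

Lemma toggleK X : involutive (toggle X).
Proof.
move=> P; apply: val_inj; case: (boolP (X \in val P)) => XP.
  have [sc | nsc] := boolP (is_sc (val P :\ X)); last by rewrite !toggle_rem_id.
  by rewrite toggle_add toggle_rem ?setD11 ?setD1K // (valP P).
have [sc | nsc] := boolP (is_sc (X |: val P)); last by rewrite !toggle_add_id.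
by rewrite toggle_rem toggle_add ?setU11 ?setU1K // (valP P).
Qed.

Lemma sum_toggle_eq0 (V : zmodType) X (D : pred (SC I)) (f : SC I -> V) :
  (forall P, D P -> D (toggle X P)) ->
  (forall P, D P -> X \notin val P -> is_sc (X |: val P) ->
     f (toggle X P) = - f P) ->
  (forall P, D P -> X \notin val P -> ~~ is_sc (X |: val P) -> f P = 0) ->
  (forall P, D P -> X \in val P -> ~~ is_sc (val P :\ X) -> f P = 0) ->
  \sum_(P | D P) f P = 0.
Proof.
move=> DX f_add f_add0 f_rem0.
have Dtoggle P : D (toggle X P) = D P.
  by apply/idP/idP => [/DX | /DX //]; rewrite toggleK.
apply: (sum_involution_eq0 (toggleK X)) => // P DP;
  case: (boolP (X \in val P)) => XP.
- have [sc | nsc] := boolP (is_sc (val P :\ X)); last first.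
    by rewrite toggle_rem_id ?f_rem0 ?oppr0.
  have XtP : X \notin val (toggle X P) by rewrite toggle_rem ?setD11.
  have sc' : is_sc (X |: val (toggle X P)).
    by rewrite toggle_rem ?setD1K ?(valP P).
  by rewrite -[in RHS](toggleK X P) (f_add (toggle X P)) ?opprK ?Dtoggle.
- have [sc | nsc] := boolP (is_sc (X |: val P)); first exact: f_add.
  by rewrite toggle_add_id ?f_add0 ?oppr0.
- move=> fixP; apply: f_rem0 => //; apply: contraT => /negPn sc.
  have := congr1 (fun Q => X \in val Q) fixP.
  by rewrite toggle_rem // setD11 XP.
- move=> fixP; apply: f_add0 => //; apply: contraT => /negPn sc.
  have := congr1 (fun Q => X \in val Q) fixP.
  by rewrite toggle_add // setU11 (negbTE XP).
Qed.

Lemma exists_minimal_new_face P G : val P \proper val G ->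
  exists2 X, X \in val G :\: val P & forall Y, Y \proper X -> Y \in val P.
Proof.
case/properP => _ [X1 X1G X1P].
have X1new : X1 \in val G :\: val P by rewrite inE X1P.
case: (arg_minnP (fun X : {set I} => #|X|) X1new) => X XGP Xmin.
have /setDP [XG _] : X \in val G :\: val P := XGP.
exists X => // Y YX; apply: contraTT (proper_card YX) => YP.
rewrite -leqNgt; apply: Xmin; apply/setDP.
by split; first exact: sc_down XG (proper_sub YX).
Qed.

Lemma sum_sc_mobius_interval P G : val P \proper val G ->
  \sum_(Q : SC I | (val P \subset val Q) && (val Q \subset val G))
     sc_mobius (val P) (val Q) = 0.
Proof.
move=> PG; have [X] := exists_minimal_new_face PG.
rewrite inE => /andP [XP XG] Xmin.
apply: (sum_toggle_eq0 (X := X)) => Q /andP [PQ QG].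
- rewrite /toggle val_insubd.
  case: (X \in val Q); case: is_sc; rewrite /= ?PQ ?QG //.
    by rewrite subsetD1 PQ XP (subset_trans (subsetDl _ _) QG).
  by rewrite (subset_trans PQ (subsetUr _ _)) subUset sub1set XG QG.
- by move=> XQ sc; rewrite toggle_add // sc_mobius_setU1r.
- by move=> XQ /negP []; apply/is_sc_setU1P => Y /Xmin /(subsetP PQ).
- move=> XQ nsc; rewrite /sc_mobius.
  case: ifP => // /andP [_ /new_faces_minimalP Qmin].
  case/negP: nsc; apply: is_sc_setD1 => Z ZQ XZ.
  apply/eqP; apply: contraNT (XP) => ZX.
  apply: (Qmin Z X ZQ); last by rewrite properEneq eq_sym ZX.
  by apply: contra XP => /sc_down; apply.
Qed.

Lemma mobius_rec_sc n P G : (#|val G| - #|val P| <= n)%N ->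
  mobius_rec R (@sc_le I) n P G = sc_mobius (val P) (val G).
Proof.
elim: n P G => [|n IH] P G Hn /=;
  case: eqVneq => [-> | PG]; rewrite ?sc_mobius_id //.
  rewrite sc_mobius_eq0 //; apply: contra PG => sPG; apply/eqP/val_inj/eqP.
  by rewrite eqEcard sPG -subn_eq0 -leqn0.
rewrite /sc_le; case: ifP => [sPG | /negbT /sc_mobius_eq0 //].
have ltPG : val P \proper val G by rewrite properEneq val_eqE PG.
have := sum_sc_mobius_interval ltPG; rewrite (bigD1 G) /= ?sPG ?subxx //.
move/eqP; rewrite addr_eq0 => /eqP ->; congr (- _); apply: eq_big => Q.
  by rewrite andbAC.
move=> /andP [/andP [PQ QG] sQG]; apply: IH.
have ltQG : (#|val Q| < #|val G|)%N.
  by apply: proper_card; rewrite properEneq val_eqE QG.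
have := subset_leq_card PQ; lia.
Qed.

Lemma card_sets_le_card_SC : (#|{: {set I}}| <= #|{: SC I}|)%N.
Proof.
have sc_pow X : is_sc (powerset X).
  by apply/is_scP => Y Z; rewrite !powersetE => YX /subset_trans; apply.
pose down X : SC I := Sub (powerset X) (sc_pow X).
apply: (@leq_card _ _ down) => X Y /(congr1 val) /= XY.
apply/eqP; rewrite eqEsubset -[X \subset Y]powersetS -[Y \subset X]powersetS.
by rewrite XY subxx.
Qed.

Lemma sc_muE P G : sc_mu R P G = sc_mobius (val P) (val G).
Proof.
apply: mobius_rec_sc; apply: leq_trans card_sets_le_card_SC.
by rewrite leq_subLR (leq_trans (max_card _)) ?leq_addl.
Qed.

Lemma omegaE G P : omega R G P = sc_mobius (val P) (val G).
Proof. by rewrite ffunE sc_muE /sc_le; case: ifP => // /negbT /sc_mobius_eq0. Qed.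

Lemma exists_crossing_facet G S : connected G -> S != set0 -> ~: S != set0 ->
  exists F, [/\ F \in val G, ~~ (F \subset S), ~~ (F \subset ~: S) &
               forall X, X \in val G -> F \subset X -> X = F].
Proof.
move=> Gconn S0 T0.
have [/exists_inP [X XG /andP [XS XT]] | /exists_inPn noX] :=
  boolP [exists X in val G, ~~ (X \subset S) && ~~ (X \subset ~: S)]; last first.
  (* Every face lies in S or in ~: S, so G = G|S ⊔ G|~S. *)
  case/negP: Gconn; apply/existsP; exists S.
  apply/existsP; exists (Sub _ (is_sc_restr S (valP G))).
  apply/existsP; exists (Sub _ (is_sc_restr (~: S) (valP G))).
  rewrite S0 T0 /=; apply/and3P; split;
    try by apply/forall_inP => Y; rewrite inE => /andP [].
  apply/eqP/setP => Y; rewrite !inE; case: (boolP (Y \in val G)) => //= YG.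
  by have := noX Y YG; rewrite negb_and !negbK.
have XF : [pred F | (F \in val G) && (X \subset F)] X by rewrite /= XG subxx.
case: (arg_maxnP (fun F : {set I} => #|F|) XF) => F /= /andP [FG XF'] Fmax.
exists F; split => //.
- by apply: contra XS; apply: subset_trans.
- by apply: contra XT; apply: subset_trans.
move=> Y YG FY; apply/eqP; rewrite eq_sym eqEcard FY /=.
by rewrite Fmax // YG (subset_trans XF' FY).
Qed.

Lemma omega_primitive G : connected G -> primitive (omega R G).
Proof.
move=> Gconn S S0 T0 A B.
have [F [FG FS FT Fmax]] := exists_crossing_facet Gconn S0 T0.
under eq_bigr do rewrite omegaE.
apply: (sum_toggle_eq0 (X := F)) => P.
- move=> /andP [PA PB]; rewrite /toggle val_insubd.
  by case: (F \in val P); case: is_sc; rewrite /= ?restr_setU1 ?restr_setD1 ?PA ?PB.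
- move=> _ FP /is_sc_setU1P sc.
  by rewrite toggle_add ?sc_mobius_setU1l //; apply/is_sc_setU1P.
- move=> _ FP nsc; rewrite /sc_mobius.
  case: ifP => // /andP [_ /new_faces_minimalP Pmin].
  by case/negP: nsc; apply/is_sc_setU1P => Y; apply: Pmin FG FP.
- move=> _ FP nsc; rewrite /sc_mobius; case: ifP => // /andP [PG _].
  by case/negP: nsc; apply: is_sc_setD1 => Y /(subsetP PG); apply: Fmax.
Qed.

Lemma omega_free (c : SC I -> R) :
  (forall P, \sum_(G : SC I | connected G) c G * omega R G P = 0) ->
  forall G, connected G -> c G = 0.
Proof.
move=> c_omega G; have [n] := ubnP (#|{: {set I}}| - #|val G|).
elim: n G => // n IH G ltGn Gconn.
have := c_omega G; rewrite (bigD1 G) //= omegaE sc_mobius_id mulr1 big1 ?addr0 //.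
move=> H /andP [Hconn HG]; rewrite omegaE.
have [GH | /sc_mobius_eq0 ->] := boolP (val G \subset val H); last by rewrite mulr0.
rewrite IH ?mul0r //.
have ltGH : (#|val G| < #|val H|)%N.
  by apply: proper_card; rewrite properEneq GH andbT val_eqE eq_sym.
rewrite -ltnS (leq_trans _ ltGn) // ltnS ltn_sub2l //.
exact: leq_trans ltGH (max_card _).
Qed.

Lemma primitive_zeta_disconnected (p : kSC R I) G :
  primitive p -> ~~ connected G -> \sum_(Q : SC I | val G \subset val Q) p Q = 0.
Proof.
move=> p_prim /negPn /existsP [S /existsP [G1 /existsP [G2]]].
case/and5P => S0 T0 G1S G2T /eqP GE.
pose restrs (Q : SC I) := (restr (val Q) S, restr (val Q) (~: S)).
rewrite (partition_big restrs
           (fun AB => (val G1 \subset AB.1) && (val G2 \subset AB.2))) /=;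
  last first.
  move=> Q; rewrite GE subUset => /andP [G1Q G2Q]; apply/andP; split;
    apply/subsetP => X XG; rewrite inE.
    by rewrite (subsetP G1Q X XG) (forall_inP G1S X XG).
  by rewrite (subsetP G2Q X XG) (forall_inP G2T X XG).
apply: big1 => -[A B] /andP [/= G1A G2B]; rewrite -[RHS](p_prim S S0 T0 A B).
apply: eq_bigl => Q; rewrite xpair_eqE.
case: eqP => [QA|]; case: eqP => [QB|]; rewrite ?andbF //= andbT.
rewrite GE subUset (subset_trans G1A) ?(subset_trans G2B) //.
  by rewrite -QB restr_subset.
by rewrite -QA restr_subset.
Qed.

Lemma sum_sc_mobius_sub P Q :
  \sum_(G : SC I | val G \subset val Q) sc_mobius (val P) (val G) = (P == Q)%:R.
Proof.
rewrite (bigID (fun G : SC I => val P \subset val G)) /= [X in _ + X]big1 ?addr0;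
  last by move=> G /andP [_ /sc_mobius_eq0].
have [<- | PQ] := eqVneq P Q.
  rewrite (big_pred1 P) ?sc_mobius_id // => G /=.
  by rewrite andbC -eqEsubset val_eqE eq_sym.
have [sPQ | nsPQ] := boolP (val P \subset val Q).
  have ltPQ : val P \proper val Q by rewrite properEneq val_eqE PQ.
  rewrite mulr0n -[RHS](sum_sc_mobius_interval ltPQ).
  by apply: eq_bigl => G; rewrite andbC.
by rewrite big1 // => G /andP [GQ PG]; case/negP: nsPQ; apply: subset_trans GQ.
Qed.

Lemma sc_mobius_inversion (p : kSC R I) P :
  p P = \sum_(G : SC I)
          (\sum_(Q : SC I | val G \subset val Q) p Q) * sc_mobius (val P) (val G).
Proof.
under eq_bigr do rewrite big_distrl big_mkcond /=.
rewrite exchange_big /=.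
under eq_bigr do rewrite -big_mkcond /= -big_distrr /= sum_sc_mobius_sub.
rewrite (bigD1 P) //= eqxx mulr1 big1 ?addr0 // => Q QP.
by rewrite eq_sym (negbTE QP) mulr0.
Qed.

Lemma primitive_span (p : kSC R I) : primitive p ->
  exists c : SC I -> R,
    forall P, p P = \sum_(G : SC I | connected G) c G * omega R G P.
Proof.
move=> p_prim; exists (fun G => \sum_(Q : SC I | val G \subset val Q) p Q) => P.
rewrite [LHS]sc_mobius_inversion (bigID (@connected I)) /= [X in _ + X]big1 ?addr0.
  by apply: eq_bigr => G _; rewrite omegaE.
by move=> G /(primitive_zeta_disconnected p_prim) ->; rewrite mul0r.
Qed.

End SimplicialComplexes.

Theorem mainTheorem18 (k : fieldType) (Hchar : [pchar k] =i pred0)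
    (I : finType) :
  (* each omega^Gamma (Gamma connected) is primitive *)
  (forall G : SC I, connected G -> primitive (omega k G)) /\
  (* the family is linearly independent *)
  (forall c : SC I -> k,
     (forall P : SC I, \sum_(G : SC I | connected G) c G * omega k G P = 0) ->
     forall G : SC I, connected G -> c G = 0) /\
  (* and spans the primitive elements *)
  (forall p : kSC k I, primitive p ->
     exists c : SC I -> k,
       forall P : SC I, p P = \sum_(G : SC I | connected G) c G * omega k G P).
Proof.
split; first exact: omega_primitive.
split; first exact: omega_free.
exact: primitive_span.
Qed.
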